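(* Let $\mathcal{A}=\{a_1,a_2,\ldots\}$ be a countably infinite set. Let $X$ be a discrete random variable taking values in $\{a_1,\ldots,a_m\}$ for some $m\in\mathbb{N}$, and let $Y$ be a discrete random variable taking values in $\mathcal{A}$. Assume that for some $\eta_1,\eta_2,\eta_3>0$ with $\eta_3\le\eta_2\le\eta_1<1$, $$\eta_2\le d_{\mathrm{TV}}(X,Y)\le\eta_1,\qquad d_{\mathrm{loc}}(X,Y)\le\eta_3.$$ Let $M$ be an integer such that $$\sum_{i=M}^\infty P_Y(a_i)\le\eta_3,\qquad M\ge\max\Bigl\{m+1,\ \frac{\eta_2}{(1-\eta_1)\eta_3}\Bigr\},$$ and let $\eta_4>0$ satisfy $-\sum_{i=M}^\infty P_Y(a_i)\log P_Y(a_i)\le\eta_4$. Then $$|H(X)-H(Y)|\le\eta_1\log\Bigl(\frac{M\eta_3}{\eta_2}-1\Bigr)+h(\eta_1)+\eta_4.$$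
   Context: For discrete random variables $X,Y$ on a set $\mathcal{A}$ with probability mass functions $P_X,P_Y$, the local distance is $d_{\mathrm{loc}}(X,Y) = \sup_{u\in\mathcal{A}} |P_X(u)-P_Y(u)|$ and the total variation distance is $d_{\mathrm{TV}}(X,Y) = \frac12\sum_{u\in\mathcal{A}}|P_X(u)-P_Y(u)|$. All logarithms are natural and entropies are in nats, with $0\log0=0$. $h(x) = -x\log x-(1-x)\log(1-x)$ denotes the binary entropy function. *)

From Stdlib Require Import Reals.
Open Scope R_scope.

(* The countable alphabet A = {a_1, a_2, ...} is identified with the
   indices 1, 2, 3, ... : nat.  Index 0 is a dummy point carrying no mass. *)

Definition is_pmf (p : nat -> R) : Prop :=
  p 0%nat = 0 /\ (forall i, 0 <= p i) /\ infinite_sum p 1.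

(* -x log x (natural log; Stdlib's ln 0 = 0, so 0 log 0 = 0). *)
Definition negxlogx (x : R) : R := - (x * ln x).

Definition h (x : R) : R := negxlogx x + negxlogx (1 - x).

Definition is_dTV (pX pY : nat -> R) (d : R) : Prop :=
  infinite_sum (fun i => Rabs (pX i - pY i) / 2) d.

Definition dloc_le (pX pY : nat -> R) (c : R) : Prop :=
  forall i, Rabs (pX i - pY i) <= c.

(* sum_{i = M}^infinity f(i) <= c, for a series of nonnegative terms
   (equivalently: all partial sums of the tail are <= c). *)
Definition tail_sum_le (f : nat -> R) (M : nat) (c : R) : Prop :=
  forall N, sum_f_R0 (fun k => f (M + k)%nat) N <= c.

Definition is_entropy (p : nat -> R) (H : R) : Prop :=
  infinite_sum (fun i => negxlogx (p i)) H.

From Stdlib Require Import Reals Lra Lia.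
Open Scope R_scope.

(* Write M = N + 1, so that the window 0..N (index 0 carries no mass) holds
   all of X.  On the window split P_X = m + s and P_Y = m + t with
   m = min(P_X, P_Y): the excesses s, t have disjoint supports, atoms at most
   eta3 (the local distance), and masses d and d - tau, where d = d_TV and
   tau <= eta3 is the mass of Y outside the window.
   1. Pointwise facts on -x log x: tangent-line bound, subadditivity and the
      cost of splitting an atom; summed, they compare the window entropies
      of X and Y through those of s and t up to the error h(d).
   2. A maximum-entropy argument counts the support sizes of s and t, which
      share the N real atoms of the window, and bounds both excess entropies
      by d log((M eta3 / d - 1) / eta3).
   3. Series facts identify H(X) with its window sum and squeeze H(Y) between
      its window sum plus the smallest and largest tail contributions.
   4. Finally d log(M eta3/d - 1) + h(d) is increased by replacing d by eta2
      inside the logarithm and by eta1 outside it. *)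

Lemma ln_le x y : 0 < x -> x <= y -> ln x <= ln y.
Proof.
  intros Hx Hxy. destruct (Rle_lt_or_eq_dec _ _ Hxy) as [Hlt | ->].
  - left. now apply ln_increasing.
  - lra.
Qed.

Lemma ln_div_pos x y : 0 < x -> 0 < y -> ln (x / y) = ln x - ln y.
Proof.
  intros Hx Hy. unfold Rdiv. rewrite ln_mult, ln_Rinv; try apply Rinv_0_lt_compat; lra.
Qed.

Lemma negxlogx_0 : negxlogx 0 = 0.
Proof. unfold negxlogx. ring. Qed.

(* Tangent-line bound: the concave function negxlogx lies below its tangent
   at any c > 0.  Equivalent to ln u <= u - 1 (Gibbs' inequality). *)
Lemma negxlogx_le_tangent a c : 0 <= a -> 0 < c -> negxlogx a <= c - a - a * ln c.
Proof.
  intros Ha Hc. destruct (Rle_lt_or_eq_dec _ _ Ha) as [Hpos | <-].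
  - assert (Hratio : ln (c / a) <= c / a - 1).
    { pose proof (exp_ineq1_le (ln (c / a))) as Hexp.
      rewrite exp_ln in Hexp by (apply Rdiv_lt_0_compat; lra). lra. }
    assert (Hsplit : ln c = ln a + ln (c / a)).
    { rewrite <- ln_mult by (try apply Rdiv_lt_0_compat; lra). f_equal. field. lra. }
    assert (Hscaled : a * ln (c / a) <= a * (c / a - 1)) by (apply Rmult_le_compat_l; lra).
    replace (a * (c / a - 1)) with (c - a) in Hscaled by (field; lra).
    unfold negxlogx. rewrite Hsplit. lra.
  - rewrite negxlogx_0. lra.
Qed.

Lemma negxlogx_ge_linear a e : 0 <= a <= e -> 0 < e -> a * (- ln e) <= negxlogx a.
Proof.
  intros [Ha Hae] He. unfold negxlogx. destruct (Rle_lt_or_eq_dec _ _ Ha) as [Hpos | <-].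
  - assert (a * ln a <= a * ln e) by (apply Rmult_le_compat_l; [lra | now apply ln_le]). lra.
  - lra.
Qed.

Lemma negxlogx_nonneg a : 0 <= a <= 1 -> 0 <= negxlogx a.
Proof.
  intros Ha. pose proof (negxlogx_ge_linear a 1 Ha Rlt_0_1) as Hlow. rewrite ln_1 in Hlow. lra.
Qed.

Lemma negxlogx_subadditive a b : 0 <= a -> 0 <= b -> negxlogx (a + b) <= negxlogx a + negxlogx b.
Proof.
  intros Ha Hb.
  pose proof (negxlogx_ge_linear a (a + b)) as Hla. pose proof (negxlogx_ge_linear b (a + b)) as Hlb.
  destruct (Rle_lt_or_eq_dec 0 (a + b)) as [Hab | Hab]; [lra | | ].
  - specialize (Hla ltac:(lra) Hab). specialize (Hlb ltac:(lra) Hab). unfold negxlogx in *. lra.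
  - assert (a = 0) as -> by lra. assert (b = 0) as -> by lra.
    rewrite Rplus_0_r, negxlogx_0. lra.
Qed.

Lemma negxlogx_split_bound a b p q : 0 <= a -> 0 <= b -> 0 < p -> 0 < q -> p + q <= 1 ->
  negxlogx a + negxlogx b <= negxlogx (a + b) + a * (- ln p) + b * (- ln q).
Proof.
  intros Ha Hb Hp Hq Hpq. destruct (Rle_lt_or_eq_dec 0 (a + b)) as [Hab | Hab]; [lra | | ].
  - pose proof (negxlogx_le_tangent a ((a + b) * p) Ha ltac:(nra)) as Ta.
    pose proof (negxlogx_le_tangent b ((a + b) * q) Hb ltac:(nra)) as Tb.
    rewrite ln_mult in Ta, Tb by lra. unfold negxlogx in *. nra.
  - assert (a = 0) as -> by lra. assert (b = 0) as -> by lra.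
    rewrite Rplus_0_r, !negxlogx_0. lra.
Qed.

Lemma negxlogx_common_part_bound m a b p q :
  0 <= m -> 0 <= a -> 0 <= b -> 0 < p -> 0 < q -> p + q <= 1 ->
  negxlogx (m + a) - negxlogx (m + b) <=
    negxlogx a - negxlogx b + m * (- ln p) + b * (- ln q).
Proof.
  intros Hm Ha Hb Hp Hq Hpq.
  pose proof (negxlogx_subadditive m a Hm Ha).
  pose proof (negxlogx_split_bound m b p q Hm Hb Hp Hq Hpq).
  lra.
Qed.

Lemma min_excess_decomposition x y :
  0 <= x - Rmin x y <= Rabs (x - y) /\
  (x - Rmin x y = 0 \/ y - Rmin x y = 0) /\ Rabs (x - y) = x + y - 2 * Rmin x y.
Proof.
  unfold Rmin. destruct (Rle_dec x y); unfold Rabs; destruct (Rcase_abs (x - y)); lra.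
Qed.

Definition supp_count (u : nat -> R) (N : nat) : R :=
  sum_f_R0 (fun i => if Req_EM_T (u i) 0 then 0 else 1) N.

Lemma mass_le_supp_count u N e : (forall i, 0 <= u i <= e) ->
  sum_f_R0 u N <= e * supp_count u N.
Proof.
  intros Hu. unfold supp_count. rewrite scal_sum. apply sum_Rle. intros i _.
  destruct (Req_EM_T (u i) 0) as [-> | _]; specialize (Hu i); lra.
Qed.

(* Maximum-entropy bound: nonnegative masses of total sigma on a support of
   size k satisfy sum negxlogx <= lam k - sigma - sigma ln lam for every lam > 0
   (optimal for lam = sigma / k, giving sigma ln (k / sigma)). *)
Lemma sum_negxlogx_le_supp_count u N lam : (forall i, 0 <= u i) -> 0 < lam ->
  sum_f_R0 (fun i => negxlogx (u i)) N <=
    lam * supp_count u N - sum_f_R0 u N - sum_f_R0 u N * ln lam.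
Proof.
  intros Hu Hlam. unfold supp_count.
  rewrite scal_sum, (Rmult_comm (sum_f_R0 u N)), scal_sum, <- !minus_sum.
  apply sum_Rle. intros i _.
  destruct (Req_EM_T (u i) 0) as [-> | _].
  - rewrite negxlogx_0. lra.
  - pose proof (negxlogx_le_tangent (u i) lam (Hu i) Hlam). lra.
Qed.

Lemma supp_count_disjoint u v N : u 0%nat = 0 -> v 0%nat = 0 ->
  (forall i, u i = 0 \/ v i = 0) -> supp_count u N + supp_count v N <= INR N.
Proof.
  intros Hu0 Hv0 Hdisj. unfold supp_count. induction N as [| N IH].
  - simpl. rewrite Hu0, Hv0. destruct (Req_EM_T 0 0); [lra | congruence].
  - rewrite !tech5, S_INR.
    destruct (Req_EM_T (u (S N)) 0), (Req_EM_T (v (S N)) 0);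
      [lra | lra | lra | destruct (Hdisj (S N)); contradiction].
Qed.

Lemma sum_negxlogx_ge_linear u N e : (forall i, 0 <= u i <= e) -> 0 < e ->
  sum_f_R0 u N * (- ln e) <= sum_f_R0 (fun i => negxlogx (u i)) N.
Proof.
  intros Hu He. rewrite Rmult_comm, scal_sum. apply sum_Rle. intros i _.
  apply negxlogx_ge_linear; auto.
Qed.

Lemma sum_negxlogx_common_part_bound m a b N p q :
  (forall i, 0 <= m i) -> (forall i, 0 <= a i) -> (forall i, 0 <= b i) ->
  0 < p -> 0 < q -> p + q <= 1 ->
  sum_f_R0 (fun i => negxlogx (m i + a i)) N - sum_f_R0 (fun i => negxlogx (m i + b i)) N <=
    sum_f_R0 (fun i => negxlogx (a i)) N - sum_f_R0 (fun i => negxlogx (b i)) N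
    + sum_f_R0 m N * (- ln p) + sum_f_R0 b N * (- ln q).
Proof.
  intros Hm Ha Hb Hp Hq Hpq.
  rewrite !(Rmult_comm (sum_f_R0 _ N)), !scal_sum, <- !minus_sum, <- !plus_sum.
  apply sum_Rle. intros i _. now apply negxlogx_common_part_bound.
Qed.

Section ExcessEntropy.
(* Their supports share N atoms, so with K = (N + 1) e / d - 1
   the entropy of s, and of t completed by an atom tau, is at most
   d ln (K / e): that of mass d spread uniformly over K d / e atoms. *)
Variables (s t : nat -> R) (N : nat) (e d tau : R).
Hypotheses (He : 0 < e) (Hd : 0 < d) (Htau : 0 <= tau <= e).
Hypotheses (Hs : forall i, 0 <= s i <= e) (Ht : forall i, 0 <= t i <= e).
Hypotheses (Hs0 : s 0%nat = 0) (Ht0 : t 0%nat = 0) (Hdisj : forall i, s i = 0 \/ t i = 0).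
Hypotheses (Hsum_s : sum_f_R0 s N = d) (Hsum_t : sum_f_R0 t N = d - tau).

Lemma excess_supp_bounds :
  d <= e * supp_count s N /\
  e * supp_count s N + d <= INR (S N) * e /\
  e * (supp_count t N + 1) + d <= INR (S N) * e.
Proof.
  pose proof (mass_le_supp_count s N e Hs) as Ms.
  pose proof (mass_le_supp_count t N e Ht) as Mt.
  pose proof (supp_count_disjoint s t N Hs0 Ht0 Hdisj) as Hcount.
  assert (e * (supp_count s N + supp_count t N) <= e * INR N)
    by (apply Rmult_le_compat_l; lra).
  rewrite S_INR. lra.
Qed.

Lemma excess_ratio_pos : 0 < INR (S N) * e / d - 1.
Proof.
  destruct excess_supp_bounds as (Hd_le & Hs_le & _).
  assert (Hgt : d < INR (S N) * e) by lra.
  apply (Rmult_lt_reg_r d); [lra |]. field_simplify; lra.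
Qed.

(* Maximum-entropy bound for s with lam = e / K, using e |supp s| <= d K. *)
Lemma excess_s_entropy :
  sum_f_R0 (fun i => negxlogx (s i)) N + d * ln e <= d * ln (INR (S N) * e / d - 1).
Proof.
  pose proof excess_ratio_pos as HK. set (K := INR (S N) * e / d - 1) in *.
  destruct excess_supp_bounds as (_ & Hs_le & _).
  assert (HlamS : e / K * supp_count s N <= d).
  { apply (Rmult_le_reg_r K); [lra |].
    replace (e / K * supp_count s N * K) with (e * supp_count s N) by (field; lra).
    replace (d * K) with (INR (S N) * e - d) by (unfold K; field; lra). lra. }
  pose proof (sum_negxlogx_le_supp_count s N (e / K) (fun i => proj1 (Hs i))
                ltac:(apply Rdiv_lt_0_compat; lra)) as Hmax.
  rewrite Hsum_s, ln_div_pos in Hmax by lra. nra.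
Qed.

(* The same for t plus the extra atom tau, using e (|supp t| + 1) <= d K. *)
Lemma excess_t_entropy :
  sum_f_R0 (fun i => negxlogx (t i)) N + negxlogx tau + d * ln e
    <= d * ln (INR (S N) * e / d - 1).
Proof.
  pose proof excess_ratio_pos as HK. set (K := INR (S N) * e / d - 1) in *.
  destruct excess_supp_bounds as (_ & _ & Ht_le).
  assert (HlamT : e / K * (supp_count t N + 1) <= d).
  { apply (Rmult_le_reg_r K); [lra |].
    replace (e / K * (supp_count t N + 1) * K) with (e * (supp_count t N + 1)) by (field; lra).
    replace (d * K) with (INR (S N) * e - d) by (unfold K; field; lra). lra. }
  assert (Hlam : 0 < e / K) by (apply Rdiv_lt_0_compat; lra).
  pose proof (sum_negxlogx_le_supp_count t N (e / K) (fun i => proj1 (Ht i)) Hlam) as Hmax.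
  pose proof (negxlogx_le_tangent tau (e / K) (proj1 Htau) Hlam) as Htan.
  rewrite Hsum_t, ln_div_pos in Hmax by lra. rewrite ln_div_pos in Htan by lra. nra.
Qed.

End ExcessEntropy.

Definition excess (u v : nat -> R) (i : nat) : R := u i - Rmin (u i) (v i).

Lemma excess_facts u v i :
  0 <= excess u v i <= Rabs (u i - v i) /\ (excess u v i = 0 \/ excess v u i = 0).
Proof.
  unfold excess. rewrite (Rmin_comm (v i)).
  destruct (min_excess_decomposition (u i) (v i)) as (Hu & Hdisj & _). tauto.
Qed.

Lemma sum_common_part u v N :
  2 * sum_f_R0 (fun i => Rmin (u i) (v i)) N =
    sum_f_R0 u N + sum_f_R0 v N - sum_f_R0 (fun i => Rabs (u i - v i)) N.
Proof.
  rewrite (sum_eq (fun i => Rabs (u i - v i)) (fun i => u i + v i - Rmin (u i) (v i) * 2))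
    by (intros i _; rewrite (proj2 (proj2 (min_excess_decomposition (u i) (v i)))); ring).
  rewrite minus_sum, plus_sum, <- scal_sum. ring.
Qed.

Lemma window_excess_masses pX pY N d tau :
  sum_f_R0 pX N = 1 -> sum_f_R0 pY N = 1 - tau ->
  sum_f_R0 (fun i => Rabs (pX i - pY i)) N = 2 * d - tau ->
  sum_f_R0 (fun i => Rmin (pX i) (pY i)) N = 1 - d /\
  sum_f_R0 (excess pX pY) N = d /\ sum_f_R0 (excess pY pX) N = d - tau.
Proof.
  intros SX SY Sabs.
  pose proof (sum_common_part pX pY N) as Sm.
  assert (Es : forall u v, sum_f_R0 (excess u v) N = sum_f_R0 u N - sum_f_R0 (fun i => Rmin (u i) (v i)) N)
    by (intros u v; apply minus_sum).
  rewrite !Es, (sum_eq (fun i => Rmin (pY i) (pX i)) (fun i => Rmin (pX i) (pY i)))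
    by (intros i _; apply Rmin_comm).
  repeat split; lra.
Qed.

Lemma window_entropy_comparison pX pY N d tau :
  (forall i, 0 <= pX i) -> (forall i, 0 <= pY i) -> 0 < d < 1 ->
  sum_f_R0 pX N = 1 -> sum_f_R0 pY N = 1 - tau ->
  sum_f_R0 (fun i => Rabs (pX i - pY i)) N = 2 * d - tau ->
  sum_f_R0 (fun i => negxlogx (pX i)) N - sum_f_R0 (fun i => negxlogx (pY i)) N <=
    sum_f_R0 (fun i => negxlogx (excess pX pY i)) N
    - sum_f_R0 (fun i => negxlogx (excess pY pX i)) N
    + (1 - d) * (- ln (1 - d)) + (d - tau) * (- ln d) /\
  sum_f_R0 (fun i => negxlogx (pY i)) N - sum_f_R0 (fun i => negxlogx (pX i)) N <=
    sum_f_R0 (fun i => negxlogx (excess pY pX i)) N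
    - sum_f_R0 (fun i => negxlogx (excess pX pY i)) N
    + (1 - d) * (- ln (1 - d)) + d * (- ln d).
Proof.
  intros HXnn HYnn Hd SX SY Sabs.
  destruct (window_excess_masses pX pY N d tau SX SY Sabs) as (Sm & Ss & St).
  set (m := fun i => Rmin (pX i) (pY i)) in Sm.
  assert (Hm : forall i, 0 <= m i) by (intro i; apply Rmin_glb; auto).
  assert (EX : sum_f_R0 (fun i => negxlogx (m i + excess pX pY i)) N
                 = sum_f_R0 (fun i => negxlogx (pX i)) N)
    by (apply sum_eq; intros i _; unfold m, excess; f_equal; ring).
  assert (EY : sum_f_R0 (fun i => negxlogx (m i + excess pY pX i)) N
                 = sum_f_R0 (fun i => negxlogx (pY i)) N)
    by (apply sum_eq; intros i _; unfold m, excess; rewrite Rmin_comm; f_equal; ring).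
  pose proof (sum_negxlogx_common_part_bound m (excess pX pY) (excess pY pX) N (1 - d) d Hm
                (fun i => proj1 (proj1 (excess_facts pX pY i)))
                (fun i => proj1 (proj1 (excess_facts pY pX i))) ltac:(lra) ltac:(lra) ltac:(lra)) as HXY.
  pose proof (sum_negxlogx_common_part_bound m (excess pY pX) (excess pX pY) N (1 - d) d Hm
                (fun i => proj1 (proj1 (excess_facts pY pX i)))
                (fun i => proj1 (proj1 (excess_facts pX pY i))) ltac:(lra) ltac:(lra) ltac:(lra)) as HYX.
  rewrite EX, EY, St, Sm in HXY. rewrite EX, EY, Ss, Sm in HYX. split; lra.
Qed.

(* HY is any number squeezed between the window
   entropy of Y plus the least and the largest possible tail contributions. *)
Lemma window_entropy_gap (pX pY : nat -> R) (N : nat) (e d tau eta4 HY : R) :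
  0 < e -> 0 < d < 1 -> 0 <= tau <= e -> 0 <= eta4 ->
  (forall i, 0 <= pX i) -> (forall i, 0 <= pY i) -> pX 0%nat = 0 -> pY 0%nat = 0 ->
  dloc_le pX pY e ->
  sum_f_R0 pX N = 1 -> sum_f_R0 pY N = 1 - tau ->
  sum_f_R0 (fun i => Rabs (pX i - pY i)) N = 2 * d - tau ->
  sum_f_R0 (fun i => negxlogx (pY i)) N + tau * (- ln e) <= HY ->
  HY <= sum_f_R0 (fun i => negxlogx (pY i)) N + eta4 ->
  0 < INR (S N) * e / d - 1 /\
  Rabs (sum_f_R0 (fun i => negxlogx (pX i)) N - HY) <=
    d * ln (INR (S N) * e / d - 1) + h d + eta4.
Proof.
  intros He Hd Htau Heta4 HXnn HYnn HX0 HY0 Hloc SX SY Sabs HYlo HYhi.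
  destruct (window_entropy_comparison pX pY N d tau HXnn HYnn Hd SX SY Sabs) as [HXY HYX].
  destruct (window_excess_masses pX pY N d tau SX SY Sabs) as (_ & Ss & St).
  set (s := excess pX pY) in *. set (t := excess pY pX) in *.
  assert (Hbound : forall u v i, dloc_le u v e -> 0 <= excess u v i <= e)
    by (intros u v i Huv; pose proof (excess_facts u v i); pose proof (Huv i); lra).
  assert (Hs : forall i, 0 <= s i <= e) by (intro i; now apply Hbound).
  assert (Ht : forall i, 0 <= t i <= e).
  { intro i. apply Hbound. intro j. rewrite <- Rabs_Ropp, Ropp_minus_distr. apply Hloc. }
  assert (Hs0 : s 0%nat = 0) by (unfold s, excess; rewrite HX0, HY0, Rmin_left; lra).
  assert (Ht0 : t 0%nat = 0) by (unfold t, excess; rewrite HX0, HY0, Rmin_left; lra).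
  assert (Hdisj : forall i, s i = 0 \/ t i = 0) by (intro i; apply (excess_facts pX pY i)).
  assert (Hd0 : 0 < d) by lra.
  pose proof (excess_ratio_pos s t N e d tau He Hd0 Htau Hs Ht Hs0 Ht0 Hdisj Ss St) as HK.
  pose proof (excess_s_entropy s t N e d tau He Hd0 Htau Hs Ht Hs0 Ht0 Hdisj Ss St) as Hsent.
  pose proof (excess_t_entropy s t N e d tau He Hd0 Htau Hs Ht Hs0 Ht0 Hdisj Ss St) as Htent.
  pose proof (sum_negxlogx_ge_linear s N e Hs He) as Hslow.
  pose proof (sum_negxlogx_ge_linear t N e Ht He) as Htlow.
  rewrite Ss in Hslow. rewrite St in Htlow.
  assert (Htau1 : tau <= 1) by (pose proof (cond_pos_sum pY N HYnn); lra).
  pose proof (negxlogx_nonneg tau ltac:(lra)) as Htau_ent.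
  assert (Hlnd : tau * ln d <= 0).
  { assert (ln d <= 0) by (rewrite <- ln_1; apply ln_le; lra). nra. }
  assert (Hh : h d = d * (- ln d) + (1 - d) * (- ln (1 - d))) by (unfold h, negxlogx; ring).
  split; [exact HK |]. apply Rabs_le. split; lra.
Qed.

Lemma Un_cv_const c : Un_cv (fun _ => c) c.
Proof. intros eps Heps. exists 0%nat. intros n _. unfold R_dist. rewrite Rminus_diag, Rabs_R0. lra. Qed.

Lemma infinite_sum_finite_support f N : (forall i, (N < i)%nat -> f i = 0) ->
  infinite_sum f (sum_f_R0 f N).
Proof.
  intros Hf.
  assert (Hconst : forall n, (N <= n)%nat -> sum_f_R0 f n = sum_f_R0 f N).
  { intros n Hn. induction Hn as [| n Hn IH]; [reflexivity |].
    rewrite tech5, IH, Hf by lia. ring. }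
  intros eps Heps. exists N. intros n Hn. unfold R_dist.
  rewrite Hconst, Rminus_diag, Rabs_R0 by lia. exact Heps.
Qed.

Lemma infinite_sum_eventually_proportional a y N c L : infinite_sum y L ->
  (forall i, (N < i)%nat -> a i = c * y i) ->
  infinite_sum a (sum_f_R0 (fun i => a i - c * y i) N + c * L).
Proof.
  intros Hy Ha.
  pose proof (infinite_sum_finite_support (fun i => a i - c * y i) N
                ltac:(intros i Hi; cbv beta; rewrite Ha by exact Hi; ring)) as Hhead.
  pose proof (CV_plus _ _ _ _ Hhead (CV_mult _ _ _ _ (Un_cv_const c) Hy)) as Hsum.
  refine (Un_cv_ext _ _ _ _ Hsum). intro n. cbv beta.
  rewrite scal_sum, <- plus_sum. apply sum_eq. intros i _. ring.
Qed.

Lemma infinite_sum_le f g F G : (forall i, f i <= g i) ->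
  infinite_sum f F -> infinite_sum g G -> F <= G.
Proof.
  intros Hfg Hf Hg. exact (Rle_cv_lim (fun n => sum_Rle f g n (fun i _ => Hfg i)) Hf Hg).
Qed.

Lemma infinite_sum_tail_lower f y N c F L : infinite_sum f F -> infinite_sum y L ->
  (forall i, (N < i)%nat -> c * y i <= f i) ->
  sum_f_R0 f N + c * (L - sum_f_R0 y N) <= F.
Proof.
  intros Hf Hy Htail.
  set (g := fun i => if (i <=? N)%nat then f i else c * y i).
  assert (Hg : infinite_sum g (sum_f_R0 (fun i => g i - c * y i) N + c * L)).
  { apply infinite_sum_eventually_proportional; [exact Hy |].
    intros i Hi. unfold g. destruct (Nat.leb_spec i N); [lia | reflexivity]. }
  assert (Hhead : sum_f_R0 (fun i => g i - c * y i) N = sum_f_R0 f N - c * sum_f_R0 y N).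
  { rewrite scal_sum, <- minus_sum. apply sum_eq. intros i Hi. unfold g.
    destruct (Nat.leb_spec i N); [ring | lia]. }
  assert (Hgf : forall i, g i <= f i).
  { intro i. unfold g. destruct (Nat.leb_spec i N); [lra | apply Htail; lia]. }
  pose proof (infinite_sum_le g f _ _ Hgf Hg Hf). lra.
Qed.

Lemma partial_sums_growing f : (forall i, 0 <= f i) -> Un_growing (fun n => sum_f_R0 f n).
Proof. intros Hf n. rewrite tech5. pose proof (Hf (S n)). lra. Qed.

Lemma partial_sums_le_window_tail f N c : (forall i, 0 <= f i) -> tail_sum_le f (S N) c ->
  forall n, sum_f_R0 f n <= sum_f_R0 f N + c.
Proof.
  intros Hf Htail n. destruct (Nat.le_gt_cases n N) as [Hle | Hgt].
  - pose proof (growing_prop _ N n (partial_sums_growing f Hf) Hle).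
    assert (0 <= c) by (apply Rle_trans with (2 := Htail 0%nat); apply cond_pos_sum; auto).
    lra.
  - rewrite (tech2 f N n Hgt). pose proof (Htail (n - S N)%nat). lra.
Qed.

Lemma pmf_le_1 p : is_pmf p -> forall i, p i <= 1.
Proof.
  intros (_ & Hnn & Hsum) i.
  pose proof (growing_ineq _ _ (partial_sums_growing p Hnn) Hsum i) as Hpartial.
  destruct i as [| i]; [simpl in *; lra |].
  rewrite tech5 in Hpartial. pose proof (cond_pos_sum p i Hnn). lra.
Qed.

Lemma pmf_window_mass p N c : is_pmf p -> tail_sum_le p (S N) c ->
  0 <= 1 - sum_f_R0 p N <= c.
Proof.
  intros (_ & Hnn & Hsum) Htail. split.
  - pose proof (growing_ineq _ _ (partial_sums_growing p Hnn) Hsum N). lra.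
  - pose proof (Rle_cv_lim (partial_sums_le_window_tail p N c Hnn Htail) Hsum
                  (Un_cv_const (sum_f_R0 p N + c))). lra.
Qed.

Lemma pmf_finite_support_mass p N : is_pmf p -> (forall i, (N < i)%nat -> p i = 0) ->
  sum_f_R0 p N = 1.
Proof.
  intros (_ & _ & Hsum) Hsupp.
  exact (uniqueness_sum _ _ _ (infinite_sum_finite_support p N Hsupp) Hsum).
Qed.

Lemma entropy_finite_support p N : (forall i, (N < i)%nat -> p i = 0) ->
  is_entropy p (sum_f_R0 (fun i => negxlogx (p i)) N).
Proof.
  intros Hsupp. apply infinite_sum_finite_support. intros i Hi.
  rewrite Hsupp by exact Hi. apply negxlogx_0.
Qed.

Lemma entropy_window_bounds p N e c : is_pmf p -> 0 < e ->
  (forall i, (N < i)%nat -> p i <= e) ->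
  tail_sum_le (fun i => negxlogx (p i)) (S N) c ->
  exists H, is_entropy p H /\
    sum_f_R0 (fun i => negxlogx (p i)) N + (1 - sum_f_R0 p N) * (- ln e) <= H /\
    H <= sum_f_R0 (fun i => negxlogx (p i)) N + c.
Proof.
  intros Hp He Hsmall Htail.
  pose proof (pmf_le_1 p Hp) as Hle1. destruct Hp as (_ & Hnn & Hsum).
  assert (Hent_nn : forall i, 0 <= negxlogx (p i)) by (intro i; apply negxlogx_nonneg; auto).
  pose proof (partial_sums_le_window_tail _ N c Hent_nn Htail) as Hbound.
  destruct (growing_cv _ (partial_sums_growing _ Hent_nn)) as [H HH].
  { exists (sum_f_R0 (fun i => negxlogx (p i)) N + c). intros x [n ->]. apply Hbound. }
  exists H. split; [exact HH | split].
  - pose proof (infinite_sum_tail_lower _ p N (- ln e) H 1 HH Hsum) as Hlow.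
    rewrite Rmult_comm. apply Hlow. intros i Hi. rewrite Rmult_comm.
    apply negxlogx_ge_linear; auto.
  - exact (Rle_cv_lim Hbound HH (Un_cv_const _)).
Qed.

(* The total variation distance, restricted to the window containing the
   support of X: the mass of Y outside the window is counted once. *)
Lemma dTV_window pX pY N d : is_dTV pX pY d -> is_pmf pY ->
  (forall i, (N < i)%nat -> pX i = 0) ->
  sum_f_R0 (fun i => Rabs (pX i - pY i)) N = 2 * d - (1 - sum_f_R0 pY N).
Proof.
  intros Hd (_ & Hnn & Hsum) Hsupp.
  assert (Htail : forall i, (N < i)%nat -> Rabs (pX i - pY i) / 2 = / 2 * pY i).
  { intros i Hi. rewrite Hsupp, Rminus_0_l, Rabs_Ropp, Rabs_right by (auto; apply Rle_ge, Hnn).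
    field. }
  pose proof (uniqueness_sum _ _ _ Hd (infinite_sum_eventually_proportional _ _ N _ _ Hsum Htail)) as Hd_eq.
  rewrite (sum_eq _ (fun i => Rabs (pX i - pY i) * / 2 - pY i * / 2)) in Hd_eq
    by (intros; unfold Rdiv; ring).
  rewrite minus_sum, <- !scal_sum in Hd_eq. lra.
Qed.

(* x |-> x ln K + h x is nondecreasing on [0, K / (K + 1)]: its derivative
   ln K + ln ((1 - x) / x) is nonnegative there.  Proved via the tangent bound
   of negxlogx at y and at 1 - y. *)
Lemma binary_entropy_tradeoff_mono K x y : 0 < K -> 0 <= x <= y -> 0 < y < 1 ->
  y <= K * (1 - y) -> x * ln K + h x <= y * ln K + h y.
Proof.
  intros HK Hx Hy Hyk. unfold h.
  pose proof (negxlogx_le_tangent x y ltac:(lra) ltac:(lra)) as Tx.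
  pose proof (negxlogx_le_tangent (1 - x) (1 - y) ltac:(lra) ltac:(lra)) as T1x.
  assert (Hln : ln y <= ln K + ln (1 - y)) by (rewrite <- ln_mult by lra; apply ln_le; lra).
  assert (Hgap : (y - x) * ln y <= (y - x) * (ln K + ln (1 - y)))
    by (apply Rmult_le_compat_l; lra).
  unfold negxlogx in *. nra.
Qed.

(* The window bound d ln (P e / d - 1) + h d is maximised, over the unknown
   d in [a, b], at d = b once the ratio is replaced by its value at d = a;
   this uses the hypothesis P >= a / ((1 - b) e) of the theorem. *)
Lemma entropy_gap_bound_mono P e a b d : 0 < e -> 0 < a <= d -> d <= b < 1 ->
  a / ((1 - b) * e) <= P -> 0 < P * e / d - 1 ->
  d * ln (P * e / d - 1) + h d <= b * ln (P * e / a - 1) + h b.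
Proof.
  intros He Ha Hb HP Hpos.
  assert (HPe : a <= P * (1 - b) * e).
  { apply (Rmult_le_compat_r ((1 - b) * e)) in HP; [| nra].
    replace (a / ((1 - b) * e) * ((1 - b) * e)) with a in HP by (field; nra). lra. }
  assert (Hratio : P * e / d - 1 <= P * e / a - 1).
  { assert (0 < P * e) by (apply (Rmult_lt_reg_r (/ d)); [apply Rinv_0_lt_compat; lra |];
                           unfold Rdiv in Hpos; lra).
    unfold Rdiv. apply Rplus_le_compat_r, Rmult_le_compat_l, Rinv_le_contravar; lra. }
  assert (HK : b <= (P * e / a - 1) * (1 - b)).
  { replace ((P * e / a - 1) * (1 - b)) with (P * (1 - b) * e / a - (1 - b)) by (field; lra).
    assert (1 <= P * (1 - b) * e / a) by (apply (Rmult_le_reg_r a); [lra |]; field_simplify; lra).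
    lra. }
  assert (Hln : d * ln (P * e / d - 1) <= d * ln (P * e / a - 1))
    by (apply Rmult_le_compat_l; [lra | apply ln_le; lra]).
  pose proof (binary_entropy_tradeoff_mono (P * e / a - 1) d b ltac:(lra) ltac:(lra) ltac:(lra) HK).
  lra.
Qed.

Theorem theorem5
  (pX pY : nat -> R) (m M : nat) (eta1 eta2 eta3 eta4 : R)
  (HpX : is_pmf pX) (HpY : is_pmf pY)
  (HXsupp : forall i, (m < i)%nat -> pX i = 0)
  (He3 : 0 < eta3) (He32 : eta3 <= eta2) (He21 : eta2 <= eta1) (He1 : eta1 < 1)
  (He4 : 0 < eta4)
  (HTV : exists d, is_dTV pX pY d /\ eta2 <= d <= eta1)
  (Hloc : dloc_le pX pY eta3)
  (Htail : tail_sum_le pY M eta3)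
  (HMm : (m + 1 <= M)%nat)
  (HMeta : eta2 / ((1 - eta1) * eta3) <= INR M)
  (Htailent : tail_sum_le (fun i => negxlogx (pY i)) M eta4) :
  exists HX HY, is_entropy pX HX /\ is_entropy pY HY /\
    Rabs (HX - HY) <= eta1 * ln (INR M * eta3 / eta2 - 1) + h eta1 + eta4.
Proof.
  destruct M as [| N]; [lia |].
  destruct HTV as (d & Hd & Hd2 & Hd1).
  pose proof HpX as (HX0 & HXnn & _). pose proof HpY as (HY0 & HYnn & _).
  assert (HXwin : forall i, (N < i)%nat -> pX i = 0) by (intros; apply HXsupp; lia).
  assert (HYsmall : forall i, (N < i)%nat -> pY i <= eta3).
  { intros i Hi. pose proof (Hloc i) as Hi_loc.
    rewrite HXwin, Rminus_0_l, Rabs_Ropp, Rabs_right in Hi_loc by (auto; apply Rle_ge, HYnn).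
    exact Hi_loc. }
  pose proof (pmf_window_mass pY N eta3 HpY Htail) as Htau.
  destruct (entropy_window_bounds pY N eta3 eta4 HpY He3 HYsmall Htailent) as (HY & HHY & HYlo & HYhi).
  destruct (window_entropy_gap pX pY N eta3 d (1 - sum_f_R0 pY N) eta4 HY He3 ltac:(lra) Htau
              ltac:(lra) HXnn HYnn HX0 HY0 Hloc (pmf_finite_support_mass pX N HpX HXwin)
              ltac:(ring) (dTV_window pX pY N d Hd HpY HXwin) HYlo HYhi) as [Hpos Hgap].
  exists (sum_f_R0 (fun i => negxlogx (pX i)) N), HY.
  split; [exact (entropy_finite_support pX N HXwin) | split; [exact HHY |]].
  pose proof (entropy_gap_bound_mono (INR (S N)) eta3 eta2 eta1 d He3
                ltac:(lra) ltac:(lra) HMeta Hpos).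
  lra.
Qed.
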